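(* For every base $b\ge 2$ there exist infinitely many $b$-wMRH numbers that are not $b$-MRH numbers.
   Context: Fix a base $b\ge 2$. $s_b(N)$ is the sum of the base-$b$ digits of $N$. For a positive integer $X$, its reversal $X^R$ is the integer whose base-$b$ representation is that of $X$ written in reverse order (leading zeros of the result are dropped). A positive integer $N$ is a $b$-wMRH number if there exists an integer $A\ge 0$ such that $N=(A+s_b(N))\cdot(A+s_b(N))^R$. A positive integer $N$ is a $b$-MRH number if there exists a positive integer $M$ such that $N=(M s_b(N))\cdot (M s_b(N))^R$. *)

From mathcomp Require Import all_boot.
Set Implicit Arguments. Unset Strict Implicit. Unset Printing Implicit Defensive.

(* Base-b digits of n, least significant first, with no trailing (leading) zeros;
   digits 0 = [::].  Fuel n suffices since n %/ b < n for b >= 2, n > 0. *)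
Fixpoint digits_fuel (fuel b n : nat) : seq nat :=
  match fuel with
  | 0 => [::]
  | fuel'.+1 => if n == 0 then [::] else (n %% b) :: digits_fuel fuel' b (n %/ b)
  end.

Definition digits (b n : nat) : seq nat := digits_fuel n b n.

Definition undigits (b : nat) (s : seq nat) : nat :=
  foldr (fun d acc => d + b * acc) 0 s.

Definition digsum (b n : nat) : nat := sumn (digits b n).

(* X^R: the integer whose base-b representation is that of X reversed
   (leading zeros of the result are automatically dropped). *)
Definition rev_b (b x : nat) : nat := undigits b (rev (digits b x)).

Definition wMRH (b N : nat) : Prop :=
  0 < N /\ exists A : nat, N = (A + digsum b N) * rev_b b (A + digsum b N).

Definition MRH (b N : nat) : Prop :=
  0 < N /\ exists M : nat, 0 < M /\ N = (M * digsum b N) * rev_b b (M * digsum b N).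

(* For k >= 0 put T = b^(k+2) and
     X_k = 1 + (b-1) T,   whose base-b digits are 1, 0, ..., 0, b-1,
   so that X_k^R = (b-1) + T, and let N_k = X_k * X_k^R.  Then:
   - N_k is b-wMRH as soon as s_b(N_k) <= X_k (take A = X_k - s_b(N_k));
   - N_k is not b-MRH as soon as s_b(N_k) does not divide N_k, since every
     b-MRH number N is a multiple of s_b(N).
   Expanding N_k = (b-1) + (b^2-2b+2) T + (b-1) T^2 gives s_b(N_k) = 3b-2 for
   b >= 3 and s_b(N_k) = 3 for b = 2, independently of k.  Non-divisibility:
   - if b is even (b >= 4), then 3b-2 is even while N_k is odd;
   - if s = s_b(N_k) > 1 is coprime to b (b odd, or b = 2), choose k with
     T = 1 mod s (Euler's theorem), whence N_k = b^2 mod s and s does not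
     divide N_k. *)

From Stdlib Require Import Arith.
From mathcomp Require Import all_boot zify cyclic.

Lemma undigits_cat b s1 s2 :
  undigits b (s1 ++ s2) = undigits b s1 + b ^ size s1 * undigits b s2.
Proof.
elim: s1 => [|x s IH] /=; first by rewrite expn0 mul1n.
by rewrite IH expnS mulnDr addnA mulnA.
Qed.

Lemma undigits_nseq0 b j : undigits b (nseq j 0) = 0.
Proof. by elim: j => //= j ->; rewrite muln0. Qed.

Section BaseDigits.

Variable b : nat.
Hypothesis hb : 2 <= b.

Lemma digits_fuel_enough f1 f2 n : n <= f1 -> n <= f2 ->
  digits_fuel f1 b n = digits_fuel f2 b n.
Proof.
elim: f1 f2 n => [|f1 IH] [|f2] n h1 h2 //=; try by have -> : n = 0 by lia.
case: eqP => // /eqP hn; congr (_ :: _).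
have : n %/ b < n by apply: ltn_Pdiv; lia.
by move=> lt; apply: IH; lia.
Qed.

Lemma digits_cons d n : d < b -> 0 < d + b * n ->
  digits b (d + b * n) = d :: digits b n.
Proof.
move=> hd hpos; rewrite /digits.
case E: (d + b * n) hpos => [|p] // _; rewrite /= -E.
have -> : (d + b * n) %% b = d by rewrite addnC mulnC modnMDl modn_small.
have -> : (d + b * n) %/ b = n by rewrite addnC mulnC divnMDl ?divn_small ?addn0 //; lia.
by congr (_ :: _); apply: digits_fuel_enough; nia.
Qed.

Lemma digsum_cons d n : d < b -> digsum b (d + b * n) = d + digsum b n.
Proof.
move=> hd; have [h|h] : d + b * n = 0 \/ 0 < d + b * n by lia.
  have [-> ->] : d = 0 /\ n = 0 by nia.
  by rewrite muln0.
by rewrite /digsum digits_cons.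
Qed.

Lemma digsum_small c : c < b -> digsum b c = c.
Proof. by move=> hc; have := @digsum_cons c 0 hc; rewrite muln0 addn0. Qed.

Lemma digsum_shift j c : digsum b (b ^ j * c) = digsum b c.
Proof.
elim: j => [|j IH]; first by rewrite expn0 mul1n.
by rewrite expnS -mulnA -(add0n (b * _)) digsum_cons ?add0n //; lia.
Qed.

Lemma digits_shift j c : 0 < c < b -> digits b (b ^ j * c) = nseq j 0 ++ [:: c].
Proof.
move=> /andP[c0 cb]; elim: j => [|j IH].
  by rewrite expn0 mul1n; have := @digits_cons c 0 cb; rewrite muln0 addn0 => ->.
have : 0 < b ^ j by rewrite expn_gt0; lia.
by move=> hpos; rewrite expnS -mulnA -(add0n (b * _)) digits_cons ?IH //; nia.
Qed.

Lemma rev_b_one_zeros j c : 0 < c < b ->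
  rev_b b (1 + b * (b ^ j * c)) = c + b ^ j.+1.
Proof.
move=> hc; rewrite /rev_b digits_cons ?digits_shift //.
rewrite rev_cons rev_cat rev_nseq /= -cats1 undigits_cat undigits_nseq0 size_nseq /=.
by rewrite muln0 !addn0 add0n muln1 expnS.
Qed.

End BaseDigits.

Lemma MRH_digsum_dvd b N : MRH b N -> digsum b N %| N.
Proof. by case=> _ [M [_ {2}->]]; rewrite dvdn_mulr // dvdn_mull. Qed.

Lemma wMRH_of_digsum_le b X :
  0 < X * rev_b b X -> digsum b (X * rev_b b X) <= X -> wMRH b (X * rev_b b X).
Proof. by move=> hpos hle; split=> //; exists (X - digsum b (X * rev_b b X)); rewrite subnK. Qed.

Definition cand_root (b k : nat) : nat := 1 + (b - 1) * b ^ k.+2.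

Definition cand (b k : nat) : nat := cand_root b k * rev_b b (cand_root b k).

Lemma cand_expand b k : 2 <= b ->
  cand b k = (1 + (b - 1) * b ^ k.+2) * ((b - 1) + b ^ k.+2).
Proof.
move=> hb; rewrite /cand /cand_root.
have -> : (b - 1) * b ^ k.+2 = b * (b ^ k.+1 * (b - 1)) by rewrite expnS mulnCA [_ * (b - 1)]mulnC.
by rewrite rev_b_one_zeros //; lia.
Qed.

(* Base-b expansions of N_k, from which the digit sums are read off. *)
Lemma cand_digits_ge3 b k : 3 <= b ->
  cand b k = (b - 1) + b * (b ^ k.+1 * (2 + b * ((b - 2) + b * (b ^ k * (b - 1))))).
Proof.
move=> hb; rewrite cand_expand; last by lia.
rewrite !expnS; set B := b ^ k.
have [c ->] : exists c, b = c + 3 by exists (b - 3); lia.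
have -> : c + 3 - 1 = c + 2 by lia.
have -> : c + 3 - 2 = c + 1 by lia.
rewrite -!plusE -!multE; ring.
Qed.

Lemma cand_digits_2 k : cand 2 k = 1 + 2 * (2 ^ k.+2 * (1 + 2 * (2 ^ k * 1))).
Proof.
rewrite cand_expand // !expnS (_ : 2 - 1 = 1) //; set B := 2 ^ k.
rewrite -!plusE -!multE; ring.
Qed.

Lemma digsum_cand_ge3 b k : 3 <= b -> digsum b (cand b k) = 3 * b - 2.
Proof.
move=> hb; rewrite cand_digits_ge3 //.
by rewrite digsum_cons ?digsum_shift ?digsum_cons ?digsum_shift ?digsum_small; lia.
Qed.

Lemma digsum_cand_2 k : digsum 2 (cand 2 k) = 3.
Proof. by rewrite cand_digits_2 digsum_cons // digsum_shift // digsum_cons // digsum_shift. Qed.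

Lemma cand_root_ge b k : 2 <= b -> b ^ k.+2 <= cand_root b k.
Proof. by move=> hb; rewrite /cand_root; nia. Qed.

Lemma cand_pos b k : 2 <= b -> 0 < cand b k.
Proof. by move=> hb; rewrite cand_expand //; nia. Qed.

Lemma cand_mod b k s : 2 <= b -> b ^ k.+2 = 1 %[mod s] -> cand b k = b * b %[mod s].
Proof.
move=> hb hT; rewrite cand_expand //.
have hX : 1 + (b - 1) * b ^ k.+2 = b %[mod s].
  by rewrite -modnDmr -modnMmr hT modnMmr modnDmr muln1; congr (_ %% s); lia.
have hXR : (b - 1) + b ^ k.+2 = b %[mod s].
  by rewrite -modnDmr hT modnDmr; congr (_ %% s); lia.
by rewrite -modnMml hX modnMml -modnMmr hXR modnMmr.
Qed.

Lemma pow_mod_one_late b s m : 1 < s -> coprime b s ->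
  exists2 k, m <= k & b ^ k.+2 = 1 %[mod s].
Proof.
move=> hs hcop; have hphi : 0 < totient s by rewrite totient_gt0; lia.
exists (totient s * (m + 2) - 2); first by nia.
have -> : (totient s * (m + 2) - 2).+2 = totient s * (m + 2) by nia.
by rewrite expnM -modnXm Euler_exp_totient // modnXm exp1n.
Qed.

Lemma cand_not_dvd_coprime b s m : 2 <= b -> 1 < s -> coprime b s ->
  exists2 k, m <= k & ~~ (s %| cand b k).
Proof.
move=> hb hs hcop; have [k hk hT] := pow_mod_one_late b s m hs hcop.
exists k => //; rewrite /dvdn (cand_mod b k s hb hT) -/(dvdn s (b * b)).
apply/negP => /gcdn_idPl hd.
have : coprime s (b * b) by rewrite coprimeMr coprime_sym hcop.
by rewrite /coprime hd; lia.
Qed.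

Lemma cand_odd b k : 2 <= b -> ~~ odd b -> odd (cand b k).
Proof.
move=> hb hev; rewrite cand_expand // oddM !oddD oddM oddB; last by lia.
by rewrite oddX (negbTE hev) /=.
Qed.

(* The divisibility obstruction for even bases: 3b - 2 is even, N_k odd. *)
Lemma cand_not_dvd_even b k : 2 <= b -> ~~ odd b -> ~~ (3 * b - 2 %| cand b k).
Proof.
move=> hb hev; apply/negP => hdvd.
have h2 : 2 %| 3 * b - 2 by rewrite dvdn_subr ?dvdn_mull ?dvdn2 //; lia.
by have := dvdn_trans h2 hdvd; rewrite dvdn2 cand_odd.
Qed.

(* For odd b the digit sum 3b - 2 is coprime to b: a common divisor divides 2. *)
Lemma coprime_3b_sub2 b : odd b -> coprime b (3 * b - 2).
Proof.
move=> hodd; have h2 : 3 * b - (3 * b - 2) = 2 by move: hodd; case: b => //; lia.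
have hg : gcdn b (3 * b - 2) %| gcdn b 2.
  rewrite dvdn_gcd dvdn_gcdl -[X in _ %| X]h2 /=.
  by apply: dvdn_sub; [apply: dvdn_mull; exact: dvdn_gcdl | exact: dvdn_gcdr].
by move: hg; rewrite (eqP (_ : coprime b 2)) ?coprimen2 // dvdn1.
Qed.

Lemma wMRH_not_MRH_of_family b s m : 2 <= b ->
  (forall k, digsum b (cand b k) = s) -> s <= b * b ->
  (exists2 k, m <= k & ~~ (s %| cand b k)) ->
  exists N, m < N /\ wMRH b N /\ ~ MRH b N.
Proof.
move=> hb hs hsb [k hk hndvd]; exists (cand b k).
have hroot := cand_root_ge b k hb.
have hbk : k.+2 < b ^ k.+2 by apply: ltn_expl.
have hb2 : b * b <= b ^ k.+2 by rewrite mulnn leq_exp2l.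
split; first by rewrite cand_expand //; nia.
split; last by move/MRH_digsum_dvd; rewrite hs; apply/negP.
by apply: wMRH_of_digsum_le; [exact: cand_pos | rewrite hs; lia].
Qed.

Theorem mainTheorem15 (b : nat) (hb : 2 <= b) :
  forall m : nat, exists N : nat, m < N /\ wMRH b N /\ ~ MRH b N.
Proof.
move=> m; have [b2 | bn2] := eqVneq b 2.
  subst b; apply: (@wMRH_not_MRH_of_family 2 3) => //; first exact: digsum_cand_2.
  exact: cand_not_dvd_coprime.
have hb3 : 3 <= b by lia.
apply: (@wMRH_not_MRH_of_family b (3 * b - 2)) => //.
- by move=> k; exact: digsum_cand_ge3.
- by nia.
case: (boolP (odd b)) => hodd.
  by apply: cand_not_dvd_coprime => //; [lia | exact: coprime_3b_sub2].
by exists m => //; apply: cand_not_dvd_even.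
Qed.
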